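(* Let $\Theta=\{\theta_1,\dots,\theta_N\}$ be a finite set of $N\ge 1$ distinct elements, and let $PES(\Theta)=\{A_{ij} : i=0,\dots,N;\ j=1,\dots,P(N,i)\}$ be its permutation event space, where $P(N,i)=\frac{N!}{(N-i)!}$. For $i\ge 0$ let $F(i)=\sum_{k=0}^{i}P(i,k)=\sum_{k=0}^{i}\frac{i!}{(i-k)!}$. For a permutation mass function $\mathscr{M}$ on $PES(\Theta)$ define $$H_{RPS}(\mathscr{M})=-\sum_{i=1}^{N}\sum_{j=1}^{P(N,i)}\mathscr{M}(A_{ij})\log\left(\frac{\mathscr{M}(A_{ij})}{F(i)-1}\right).$$ Then the maximum of $H_{RPS}(\mathscr{M})$ over all permutation mass functions $\mathscr{M}$ on $PES(\Theta)$ equals $$H_{\max\text{-}RPS}=\log\left(\sum_{i=1}^{N}P(N,i)\,(F(i)-1)\right).$$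
   Context: The permutation event space $PES(\Theta)$ is the set of all ordered tuples of distinct elements of $\Theta$ (including the empty tuple $\emptyset=A_{01}$): for each $i\in\{0,\dots,N\}$, the tuples of length $i$ are enumerated as $A_{i1},\dots,A_{i,P(N,i)}$. A permutation mass function (PMF) is a map $\mathscr{M}:PES(\Theta)\to[0,1]$ with $\mathscr{M}(\emptyset)=0$ and $\sum_{A\in PES(\Theta)}\mathscr{M}(A)=1$. The logarithm has a fixed base $b>1$, and the convention $0\log 0=0$ is used. *)

From HB Require Import structures.
From mathcomp Require Import all_boot all_order all_algebra.
From mathcomp Require Import all_classical all_reals all_analysis.
Set Implicit Arguments. Unset Strict Implicit. Unset Printing Implicit Defensive.
Import Order.TTheory GRing.Theory Num.Theory.
Local Open Scope ring_scope.

(* Permutation event space: ordered tuples of distinct elements of T, of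
   every length k = 0..#|T|.  *)
Definition PES (T : finType) : finType :=
  {k : 'I_(#|T|).+1 & {t : k.-tuple T | uniq t}}.

Definition ev_len (T : finType) (A : PES T) : nat := tag A.

(* P(n,k) = n!/(n-k)! is the falling factorial n ^_ k;
   F(i) = sum_{k=0}^i P(i,k) *)
Definition Fsum (i : nat) : nat := (\sum_(k < i.+1) i ^_ k)%N.

Definition logb (R : realType) (b x : R) : R := ln x / ln b.

Definition is_PMF (R : realType) (T : finType) (M : PES T -> R) : Prop :=
  (forall A, 0 <= M A <= 1) /\
  (forall A, ev_len A = 0%N -> M A = 0) /\
  \sum_(A : PES T) M A = 1.

Definition H_term (R : realType) (b : R) (T : finType) (M : PES T -> R)
    (A : PES T) : R :=
  if M A == 0 then 0
  else M A * logb b (M A / ((Fsum (ev_len A))%:R - 1)).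

Definition H_RPS (R : realType) (b : R) (T : finType) (M : PES T -> R) : R :=
  - \sum_(A : PES T | (0 < ev_len A)%N) H_term b M A.

Definition H_max_RPS (R : realType) (b : R) (T : finType) : R :=
  logb b (\sum_(1 <= i < #|T|.+1) (#|T| ^_ i)%:R * ((Fsum i)%:R - 1)).

(* Gibbs' inequality.  Give each nonempty event A the weight w_A = F(|A|) - 1,
   which is positive, and let S be the total weight.  Then
   H_RPS(M) ln b = - sum_A M_A ln (M_A / w_A) <= ln S, by summing the pointwise
   bound M_A ln (M_A / w_A) >= M_A - w_A / S - M_A ln S (an instance of
   ln u <= u - 1), with equality for M_A = w_A / S.  Grouping the events by
   length, of which there are P(N, i) of length i, turns S into
   sum_i P(N, i) (F(i) - 1). *)

From mathcomp Require Import all_boot all_order all_algebra.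
From mathcomp Require Import all_classical all_reals all_analysis.
From mathcomp Require Import ring lra.
Set Implicit Arguments. Unset Strict Implicit. Unset Printing Implicit Defensive.
Import Order.TTheory GRing.Theory Num.Theory.
Local Open Scope ring_scope.

Section Gibbs.
Variable R : realType.

Definition xlnx_div (x y : R) : R := if x == 0 then 0 else x * ln (x / y).

Lemma ln_le_subr1 (x : R) : 0 < x -> ln x <= x - 1.
Proof.
by move=> x_gt0; have := @le_ln1Dx R (x - 1); rewrite addrCA subrr addr0; apply; lra.
Qed.

Lemma xlnx_div_lb (x y s : R) : 0 <= x -> 0 < y -> 0 < s ->
  x - y / s - x * ln s <= xlnx_div x y.
Proof.
rewrite /xlnx_div => x_ge0 y_gt0 s_gt0; have [->|x_neq0] := eqVneq x 0.
  by rewrite mul0r !subr0 sub0r oppr_le0 divr_ge0 // ltW.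
have x_gt0 : 0 < x by rewrite lt_def x_neq0.
rewrite ln_div ?posrE //.
have := ln_le_subr1 (divr_gt0 y_gt0 (mulr_gt0 x_gt0 s_gt0)).
rewrite ln_div ?posrE ?mulr_gt0 // lnM ?posrE // => /(ler_wpM2l x_ge0).
have -> : x * (y / (x * s) - 1) = y / s - x by field; rewrite !gt_eqF.
lra.
Qed.

Variables (I : finType) (P : pred I) (w : I -> R).
Hypothesis w_gt0 : forall i, P i -> 0 < w i.

Lemma sum_weight_gt0 i0 : P i0 -> 0 < \sum_(i | P i) w i.
Proof.
move=> P_i0; rewrite (bigD1 i0) //= ltr_pwDl ?w_gt0 //.
by apply: sumr_ge0 => i /andP[P_i _]; exact/ltW/w_gt0.
Qed.

Lemma weight_le_sum i0 : P i0 -> w i0 <= \sum_(i | P i) w i.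
Proof.
move=> P_i0; rewrite (bigD1 i0) //= lerDl.
by apply: sumr_ge0 => i /andP[P_i _]; exact/ltW/w_gt0.
Qed.

Lemma gibbs_le (p : I -> R) :
  (forall i, P i -> 0 <= p i) -> \sum_(i | P i) p i = 1 ->
  - \sum_(i | P i) xlnx_div (p i) (w i) <= ln (\sum_(i | P i) w i).
Proof.
move=> p_ge0 p_sum1.
have [i0 /andP[P_i0 _]] : exists i0, P i0 && (0 < p i0).
  by apply: psumr_neq0P => //; rewrite p_sum1; apply/eqP/oner_neq0.
set S := \sum_(i | P i) w i; have S_gt0 : 0 < S := sum_weight_gt0 P_i0.
have term_lb i : P i -> p i - w i / S - p i * ln S <= xlnx_div (p i) (w i).
  by move=> P_i; rewrite xlnx_div_lb ?p_ge0 ?w_gt0.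
rewrite lerNl; apply: le_trans (ler_sum _ term_lb).
rewrite !big_split /= !sumrN -!mulr_suml p_sum1 divff ?gt_eqF //.
by rewrite mul1r subrr sub0r.
Qed.

Lemma gibbs_eq i0 : P i0 ->
  - \sum_(i | P i) xlnx_div (w i / \sum_(j | P j) w j) (w i) = ln (\sum_(i | P i) w i).
Proof.
move=> P_i0; set S := \sum_(i | P i) w i; have S_gt0 : 0 < S := sum_weight_gt0 P_i0.
rewrite (eq_bigr (fun i => - ln S * (w i / S))); last first.
  move=> i P_i; have w_i_gt0 := w_gt0 P_i.
  rewrite /xlnx_div mulf_eq0 invr_eq0 !gt_eqF //= mulrC mulrAC divff ?gt_eqF //.
  by rewrite div1r lnV ?posrE.
by rewrite -mulr_sumr -mulr_suml divff ?gt_eqF // mulr1 opprK.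
Qed.

End Gibbs.

Lemma card_uniq_tuple_sig (T : finType) (k : nat) :
  #|{: {t : k.-tuple T | uniq t}}| = #|T| ^_ k.
Proof.
rewrite card_sig -(card_uniq_tuples k predT) cardsE.
by apply: eq_card => t; rewrite !inE unfold_in /= all_predT.
Qed.

Lemma sum_PES_by_len (V : nmodType) (T : finType) (Q : pred nat) (F : nat -> V) :
  \sum_(A : PES T | Q (ev_len A)) F (ev_len A) =
  \sum_(i < #|T|.+1 | Q i) F i *+ #|T| ^_ i.
Proof.
transitivity (\sum_(i < #|T|.+1 | Q i) \sum_(t : {t : i.-tuple T | uniq t}) F i).
  by rewrite sig_big_dep; apply: eq_bigl => A; rewrite andbT.
by apply: eq_bigr => i _; rewrite sumr_const card_uniq_tuple_sig.
Qed.

Lemma Fsum_ge2 (i : nat) : (0 < i)%N -> (2 <= Fsum i)%N.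
Proof.
case: i => // i _; rewrite /Fsum !big_ord_recl ffactn0 /= /bump /= ffactn1.
by rewrite addnA leq_addr.
Qed.

Section PermutationEntropy.
Variables (R : realType) (T : finType).

Definition rps_weight (A : PES T) : R := (Fsum (ev_len A))%:R - 1.

Definition max_entropy_PMF (A : PES T) : R :=
  if (0 < ev_len A)%N
  then rps_weight A / \sum_(B : PES T | (0 < ev_len B)%N) rps_weight B
  else 0.

Lemma rps_weight_gt0 (A : PES T) : (0 < ev_len A)%N -> 0 < rps_weight A.
Proof.
by move=> /Fsum_ge2 F_ge2; rewrite /rps_weight subr_gt0 (@ltr_nat R 1).
Qed.

Lemma exists_PES_len1 : (0 < #|T|)%N -> exists A : PES T, ev_len A = 1%N.
Proof.
move=> T_gt0; have [x _] := card_gt0P T_gt0.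
by exists (Tagged (fun k : 'I_#|T|.+1 => {t : k.-tuple T | uniq t})
  (exist _ [tuple x] isT : {t : (Ordinal (T_gt0 : 1 < #|T|.+1)%N).-tuple T | uniq t})).
Qed.

Lemma H_RPS_ln (b : R) (M : PES T -> R) :
  H_RPS b M = (- \sum_(A | (0 < ev_len A)%N) xlnx_div (M A) (rps_weight A)) / ln b.
Proof.
rewrite /H_RPS mulNr mulr_suml; congr (- _); apply: eq_bigr => A _.
by rewrite /H_term /xlnx_div /logb; case: eqP => _; rewrite ?mul0r ?mulrA.
Qed.

Lemma H_max_RPS_ln (b : R) :
  H_max_RPS b T = ln (\sum_(A | (0 < ev_len A)%N) rps_weight A) / ln b.
Proof.
rewrite /H_max_RPS /logb /rps_weight.
rewrite (sum_PES_by_len T (fun i => 0 < i)%N (fun i => (Fsum i)%:R - 1)) big_geq_mkord.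
by congr (ln _ / _); apply: eq_big => // i; rewrite mulr_natl.
Qed.

Lemma PMF_sum_len_gt0 (M : PES T -> R) :
  is_PMF M -> \sum_(A | (0 < ev_len A)%N) M A = 1.
Proof.
case=> _ [M_len0 <-]; rewrite [RHS](bigID (fun A => 0 < ev_len A)%N) /=.
by rewrite [X in _ = _ + X]big1 ?addr0 // => A; rewrite -eqn0Ngt => /eqP/M_len0.
Qed.

Lemma max_entropy_PMF_is_PMF : (0 < #|T|)%N -> is_PMF max_entropy_PMF.
Proof.
move=> /exists_PES_len1 [A1 len_A1]; have pos_A1 : (0 < ev_len A1)%N by rewrite len_A1.
have S_gt0 := sum_weight_gt0 rps_weight_gt0 pos_A1.
have w_le_S A := weight_le_sum rps_weight_gt0 (i0 := A).
rewrite /max_entropy_PMF; set S := \sum_(B | _) _ in S_gt0 w_le_S *.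
split; [|split].
- move=> A; case: ifP => pos_A; last by rewrite lexx ler01.
  rewrite divr_ge0 ?(ltW S_gt0) ?(ltW (rps_weight_gt0 pos_A)) //=.
  by rewrite ler_pdivrMr // mul1r w_le_S.
- by move=> A ->.
- rewrite (bigID (fun A => 0 < ev_len A)%N) /= [X in _ + X]big1 => [|A /negbTE -> //].
  rewrite addr0 (eq_bigr (fun A => rps_weight A / S)) => [|A -> //].
  by rewrite -mulr_suml divff ?gt_eqF.
Qed.

End PermutationEntropy.

Theorem theorem4 (R : realType) (b : R) (hb : 1 < b) (T : finType)
    (hN : (0 < #|T|)%N) :
  (forall M : PES T -> R, is_PMF M -> H_RPS b M <= H_max_RPS b T) /\
  (exists M : PES T -> R, is_PMF M /\ H_RPS b M = H_max_RPS b T).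
Proof.
have lnb_gt0 : 0 < ln b by rewrite ln_gt0.
have w_gt0 := @rps_weight_gt0 R T.
have [A1 len_A1] := exists_PES_len1 hN.
have pos_A1 : (0 < ev_len A1)%N by rewrite len_A1.
split.
- move=> M M_PMF; rewrite H_RPS_ln H_max_RPS_ln ler_pM2r ?invr_gt0 //.
  apply: (gibbs_le w_gt0 _ (PMF_sum_len_gt0 M_PMF)).
  by case: M_PMF => M01 _ A _; case/andP: (M01 A).
- exists (@max_entropy_PMF R T); split; first exact: max_entropy_PMF_is_PMF.
  rewrite H_RPS_ln H_max_RPS_ln -(gibbs_eq w_gt0 pos_A1).
  by congr (- _ / _); apply: eq_bigr => A pos_A; rewrite /max_entropy_PMF pos_A.
Qed.
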